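(* For all $k\ge0$, $$\|\mathbf H^{k+1}-\tilde{\mathbf H}^{k+1}\|_F\le\big(1-\delta+2\gamma(1-\delta)\big)\|\mathbf H^k-\tilde{\mathbf H}^k\|_F+4\gamma\|\mathbf E^k\|_F+2\gamma\|\mathbf H^k-\mathbf W^\infty\mathbf H^k\|_F+L_2\|\mathbf x^{k+1}-\mathbf x^k\|.$$
   Context: $W\in\mathbb{R}^{n\times n}$ is entrywise nonnegative, symmetric, $W1_n=1_n$, with $w_{ij}=0$ iff $j$ is neither $i$ nor a neighbor of $i$ in an undirected connected graph. Each $f_i:\mathbb{R}^d\to\mathbb{R}$ is $C^2$ with $L_1$-Lipschitz gradient and $L_2$-Lipschitz Hessian. $\mathcal Q:\mathbb{R}^{d\times d}\to\mathbb{R}^{d\times d}$ is deterministic with $\|\mathcal Q(A)-A\|_F\le(1-\delta)\|A\|_F$, $\delta\in(0,1]$, applied blockwise to $nd\times d$ matrices. Notation: $\mathbf x=[x_1;\dots;x_n]\in\mathbb{R}^{nd}$; $\mathbf W=W\otimes I_d$, $\mathbf W^\infty=\frac1n1_n1_n^T\otimes I_d$; $\nabla^2f(\mathbf x)=[\nabla^2f_1(x_1);\dots;\nabla^2f_n(x_n)]\in\mathbb{R}^{nd\times d}$. With $\gamma>0$, arbitrary points $\mathbf x^k\in\mathbb{R}^{nd}$, and arbitrary $\mathbf E^0,\tilde{\mathbf H}^0$, $H_i^0=\nabla^2f_i(x_i^0)$, the sequences satisfy for $k\ge0$: $\mathbf E^{k+1}=\mathbf E^k+\mathbf H^k-\tilde{\mathbf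 H}^k-\mathcal Q(\mathbf E^k+\mathbf H^k-\tilde{\mathbf H}^k)$; $\tilde{\mathbf H}^{k+1}=\tilde{\mathbf H}^k+\mathcal Q(\mathbf H^k-\tilde{\mathbf H}^k)$; $\hat{\mathbf H}^k=\tilde{\mathbf H}^k+\mathcal Q(\mathbf E^k+\mathbf H^k-\tilde{\mathbf H}^k)$; $\mathbf H^{k+1}=\mathbf H^k-\gamma(I_{nd}-\mathbf W)\hat{\mathbf H}^k+\nabla^2f(\mathbf x^{k+1})-\nabla^2f(\mathbf x^k)$. *)

From HB Require Import structures.
From mathcomp Require Import all_boot all_order all_algebra.
From mathcomp Require Import all_classical all_reals all_analysis.
Set Implicit Arguments. Unset Strict Implicit. Unset Printing Implicit Defensive.
Import Order.TTheory GRing.Theory Num.Theory.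
Import numFieldNormedType.Exports.
Local Open Scope ring_scope.

Section Defs.
Variable R : realType.

Definition frob (p q : nat) (A : 'M[R]_(p, q)) : R :=
  Num.sqrt (\sum_(a < p) \sum_(b < q) (A a b) ^+ 2).

(* Frobenius norm of a block-column matrix [B_1; ...; B_n] (stacked blocks);
   for 1 x d blocks this is the Euclidean norm of the stacked vector. *)
Definition frobB (n p q : nat) (B : 'I_n -> 'M[R]_(p, q)) : R :=
  Num.sqrt (\sum_(i < n) \sum_(a < p) \sum_(b < q) (B i a b) ^+ 2).

Definition ev (d : nat) (j : 'I_d) : 'rV[R]_d := delta_mx 0 j.

Definition partial (d : nat) (f : 'rV[R]_d -> R) (j : 'I_d) (x : 'rV[R]_d) : R :=
  'D_(ev j) f x.

Definition gradient (d : nat) (f : 'rV[R]_d -> R) (x : 'rV[R]_d) : 'rV[R]_d :=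
  \row_j partial f j x.

Definition hessian (d : nat) (f : 'rV[R]_d -> R) (x : 'rV[R]_d) : 'M[R]_d :=
  \matrix_(i, j) 'D_(ev j) (partial f i) x.

Definition C2 (d : nat) (f : 'rV[R]_d -> R) : Prop :=
  (forall x, differentiable f x) /\
  (forall i x, differentiable (partial f i) x) /\
  (forall i j, continuous (fun x => hessian f x i j)).

(* [(I - W) (x) I_d] applied to a block-column matrix *)
Definition IminusW_apply (n d : nat) (W : 'M[R]_n) (B : 'I_n -> 'M[R]_d)
  : 'I_n -> 'M[R]_d :=
  fun i => \sum_(j < n) (((i == j)%:R - W i j) *: B j).

(* [W^infty] applied: every block is the average of the blocks *)
Definition Winf_apply (n d : nat) (B : 'I_n -> 'M[R]_d) : 'I_n -> 'M[R]_d :=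
  fun _ => n%:R^-1 *: \sum_(j < n) B j.

End Defs.

From HB Require Import structures.
From mathcomp Require Import all_boot all_order all_algebra.
From mathcomp Require Import all_classical all_reals all_analysis.
From mathcomp Require Import ring lra.
Import Order.TTheory GRing.Theory Num.Theory.
Import numFieldNormedType.Exports.
Set Implicit Arguments. Unset Strict Implicit. Unset Printing Implicit Defensive.
Local Open Scope ring_scope.

(* Write D := H^k - H~^k.  The recursions give
     H^{k+1} - H~^{k+1} = (D - Q D) - gamma (I - W) H^^k + (hess f(x^{k+1}) - hess f(x^k)),
   where H^^k = H~^k + Q(E^k + D).  The first term has norm at most (1 - delta) |D| by
   the contraction of Q, the last at most L2 |x^{k+1} - x^k| blockwise.  As W is
   nonnegative and doubly stochastic, Jensen's inequality on each entry gives
   |W Y| <= |Y|, hence |(I - W) Y| <= 2 |Y|; and as (I - W) kills constant block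
   columns we may take Y = H^^k - W^oo H^k = (Q A - A) + E^k + (H^k - W^oo H^k) with
   A = E^k + D, whose norm is at most (1 - delta) |D| + 2 |E^k| + |H^k - W^oo H^k|. *)

Section L2norm.
Variables (R : realType) (I : finType).
Implicit Types (u v w y : I -> R) (c : R).

Definition l2norm u : R := Num.sqrt (\sum_i u i ^+ 2).

Lemma sum_sqr_ge0 u : 0 <= \sum_i u i ^+ 2.
Proof. by apply: sumr_ge0 => i _; rewrite sqr_ge0. Qed.

Lemma l2norm_ge0 u : 0 <= l2norm u.
Proof. exact: sqrtr_ge0. Qed.

Lemma sqr_l2norm u : l2norm u ^+ 2 = \sum_i u i ^+ 2.
Proof. exact/sqr_sqrtr/sum_sqr_ge0. Qed.

Lemma l2norm_eq0 u : l2norm u = 0 -> forall i, u i = 0.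
Proof.
move=> u0 i; have /eqP := sqr_l2norm u; rewrite u0 expr0n eq_sym psumr_eq0.
  by move=> /allP /(_ i (mem_index_enum i)) /=; rewrite sqrf_eq0 => /eqP.
by move=> j _; rewrite sqr_ge0.
Qed.

Lemma l2norm_le u v : (forall i, u i ^+ 2 <= v i ^+ 2) -> l2norm u <= l2norm v.
Proof. by move=> uv; rewrite ler_sqrt ?sum_sqr_ge0 //; apply: ler_sum. Qed.

Lemma l2normZ c u : l2norm (fun i => c * u i) = `|c| * l2norm u.
Proof.
rewrite /l2norm; under eq_bigr do rewrite exprMn.
by rewrite -mulr_sumr sqrtrM ?sqr_ge0 // sqrtr_sqr.
Qed.

Lemma sum_mul_le_l2norm u v : \sum_i u i * v i <= l2norm u * l2norm v.
Proof.
set a := l2norm u; set b := l2norm v; set C := \sum_i u i * v i.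
have [/eqP|ab_gt0] := eqVneq (a * b) 0.
  rewrite mulf_eq0 => /orP[] /eqP/l2norm_eq0 uv0;
    by rewrite /C big1 ?mulr_ge0 ?l2norm_ge0 // => i _; rewrite uv0 ?mul0r ?mulr0.
have {}ab_gt0 : 0 < a * b by rewrite lt_def ab_gt0 mulr_ge0 ?l2norm_ge0.
have : 0 <= \sum_i (b * u i - a * v i) ^+ 2 by rewrite sum_sqr_ge0.
have -> : \sum_i (b * u i - a * v i) ^+ 2 = 2 * (a * b) * (a * b - C).
  transitivity (\sum_i (b ^+ 2 * u i ^+ 2 - (2 * a * b) * (u i * v i) + a ^+ 2 * v i ^+ 2)).
    by apply: eq_bigr => i _; ring.
  by rewrite big_split sumrB /= -!mulr_sumr -!sqr_l2norm -/C -/a -/b; ring.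
nra.
Qed.

Lemma l2normD u v : l2norm (fun i => u i + v i) <= l2norm u + l2norm v.
Proof.
have ab_ge0 := addr_ge0 (l2norm_ge0 u) (l2norm_ge0 v).
rewrite -(ger0_norm ab_ge0) -sqrtr_sqr ler_sqrt ?sqr_ge0 //.
have -> : \sum_i (u i + v i) ^+ 2
          = l2norm u ^+ 2 + 2 * \sum_i u i * v i + l2norm v ^+ 2.
  by rewrite !sqr_l2norm mulr_sumr -!big_split /=; apply: eq_bigr => i _; ring.
have := sum_mul_le_l2norm u v; nra.
Qed.

Lemma l2norm_le_scale c u v :
  (forall i, 0 <= u i) -> (forall i, 0 <= v i) -> (forall i, v i <= c * u i) ->
  l2norm v <= c * l2norm u.
Proof.
move=> u_ge0 v_ge0 vu; have [c_ge0|c_lt0] := leP 0 c.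
  rewrite -(ger0_norm c_ge0) -l2normZ; apply: l2norm_le => i.
  by rewrite ler_sqr ?nnegrE ?v_ge0 ?mulr_ge0 ?u_ge0 // ger0_norm.
(* [c < 0] must be allowed, as [L2 >= 0] is not assumed; then [u] and [v] vanish. *)
have uv0 i : u i = 0 /\ v i = 0.
  by have := vu i; have := u_ge0 i; have := v_ge0 i; nra.
rewrite /l2norm !big1 ?sqrtr0 ?mulr0 // => i _;
  by rewrite ?(uv0 i).1 ?(uv0 i).2 expr0n.
Qed.

Lemma jensen_sqr w y : (forall i, 0 <= w i) -> \sum_i w i = 1 ->
  (\sum_i w i * y i) ^+ 2 <= \sum_i w i * y i ^+ 2.
Proof.
move=> w_ge0 w1; set m := \sum_i w i * y i.
have : 0 <= \sum_i w i * (y i - m) ^+ 2.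
  by apply: sumr_ge0 => i _; rewrite mulr_ge0 ?sqr_ge0.
suff -> : \sum_i w i * (y i - m) ^+ 2 = \sum_i w i * y i ^+ 2 - m ^+ 2.
  by rewrite subr_ge0.
transitivity (\sum_i (w i * y i ^+ 2 - (2 * m) * (w i * y i) + m ^+ 2 * w i)).
  by apply: eq_bigr => i _; ring.
by rewrite big_split sumrB /= -!mulr_sumr -/m w1; ring.
Qed.

Lemma sum_sqr_mix_le (W : I -> I -> R) y :
  (forall i j, 0 <= W i j) ->
  (forall i, \sum_j W i j = 1) -> (forall j, \sum_i W i j = 1) ->
  \sum_i (\sum_j W i j * y j) ^+ 2 <= \sum_j y j ^+ 2.
Proof.
move=> W_ge0 rows cols.
apply: le_trans (ler_sum _ (fun i _ => jensen_sqr y (W_ge0 i) (rows i))) _.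
by rewrite exchange_big; under eq_bigr do rewrite -mulr_suml cols mul1r.
Qed.

End L2norm.

Section BlockNorms.
Variables (R : realType) (n p q : nat).
Implicit Types (B C : 'I_n -> 'M[R]_(p, q)) (c : R).

Lemma frobB_ge0 B : 0 <= frobB B.
Proof. exact: sqrtr_ge0. Qed.

Lemma frobBE B : frobB B = l2norm (fun z : 'I_n * ('I_p * 'I_q) => B z.1 z.2.1 z.2.2).
Proof.
rewrite /frobB /l2norm; congr Num.sqrt.
by under eq_bigr do rewrite pair_bigA; rewrite pair_bigA.
Qed.

Lemma frobB_blocks B : frobB B = l2norm (fun i => frob (B i)).
Proof.
rewrite /frobB /l2norm /frob; congr Num.sqrt; apply: eq_bigr => i _.
by rewrite sqr_sqrtr //; apply: sumr_ge0 => a _; exact: sum_sqr_ge0.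
Qed.

Lemma eq_frobB B C : (forall i, B i = C i) -> frobB B = frobB C.
Proof. by move=> BC; congr frobB; apply/funext. Qed.

Lemma frobBD B C : frobB (fun i => B i + C i) <= frobB B + frobB C.
Proof.
have -> : frobB (fun i => B i + C i)
          = l2norm (fun z => B z.1 z.2.1 z.2.2 + C z.1 z.2.1 z.2.2).
  by rewrite frobBE; congr l2norm; apply/funext => z; rewrite mxE.
by rewrite !frobBE; apply: l2normD.
Qed.

Lemma frobBZ c B : frobB (fun i => c *: B i) = `|c| * frobB B.
Proof.
rewrite !frobBE -l2normZ; congr l2norm; apply/funext => z; exact: mxE.
Qed.

Lemma frobBN B : frobB (fun i => - B i) = frobB B.
Proof.
rewrite -[RHS]mul1r -normrN1 -frobBZ.
by apply: eq_frobB => i; rewrite scaleN1r.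
Qed.

Lemma frobBB B C : frobB (fun i => B i - C i) <= frobB B + frobB C.
Proof. by rewrite -(frobBN C); apply: frobBD. Qed.

Lemma frobB_mix_le (W : 'M[R]_n) B :
  (forall i j, 0 <= W i j) ->
  (forall i, \sum_j W i j = 1) -> (forall j, \sum_i W i j = 1) ->
  frobB (fun i => \sum_j W i j *: B j) <= frobB B.
Proof.
move=> W_ge0 rows cols; rewrite /frobB ler_sqrt; last first.
  by apply: sumr_ge0 => i _; apply: sumr_ge0 => a _; exact: sum_sqr_ge0.
rewrite exchange_big [leRHS]exchange_big /=; apply: ler_sum => a _.
rewrite exchange_big [leRHS]exchange_big /=; apply: ler_sum => b _.
under eq_bigr do rewrite summxE; under eq_bigr do under eq_bigr do rewrite mxE.
exact: sum_sqr_mix_le.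
Qed.

End BlockNorms.

Lemma frobB_le_blockwise (R : realType) (n p q p' q' : nat) (c : R)
    (B : 'I_n -> 'M[R]_(p, q)) (C : 'I_n -> 'M[R]_(p', q')) :
  (forall i, frob (B i) <= c * frob (C i)) -> frobB B <= c * frobB C.
Proof.
by move=> BC; rewrite !frobB_blocks; apply: l2norm_le_scale => // i; exact: sqrtr_ge0.
Qed.

Definition hatH (R : realType) (n d : nat) (Q : 'M[R]_d -> 'M[R]_d)
    (E H Ht : 'I_n -> 'M[R]_d) (j : 'I_n) : 'M[R]_d :=
  Ht j + Q (E j + H j - Ht j).

Section CompressedGossip.
Variables (R : realType) (n d : nat) (W : 'M[R]_n).
Variables (Q : 'M[R]_d -> 'M[R]_d) (delta : R).
Hypothesis W_ge0 : forall i j, 0 <= W i j.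
Hypothesis W_rows : forall i, \sum_j W i j = 1.
Hypothesis W_cols : forall j, \sum_i W i j = 1.
Hypothesis HQ : forall A, frob (Q A - A) <= (1 - delta) * frob A.
Implicit Types B E H Ht : 'I_n -> 'M[R]_d.

Lemma IminusW_applyE B i : IminusW_apply W B i = B i - \sum_j W i j *: B j.
Proof.
rewrite /IminusW_apply; under eq_bigr do rewrite scalerBl; rewrite sumrB.
congr (_ - _); rewrite (bigD1 i) //= eqxx scale1r big1 ?addr0 // => j.
by rewrite eq_sym => /negbTE ->; rewrite scale0r.
Qed.

Lemma IminusW_apply_subr B (c : 'M[R]_d) i :
  IminusW_apply W (fun j => B j - c) i = IminusW_apply W B i.
Proof.
rewrite !IminusW_applyE; under eq_bigr do rewrite scalerBr.
by rewrite sumrB -scaler_suml W_rows scale1r opprB addrA subrK.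
Qed.

Lemma frobB_IminusW_le B : frobB (IminusW_apply W B) <= 2 * frobB B.
Proof.
rewrite (eq_frobB (IminusW_applyE B)).
apply: le_trans (frobBB _ _) _.
by have := frobB_mix_le B W_ge0 W_rows W_cols; lra.
Qed.

Lemma frobB_compress_err B :
  frobB (fun i => Q (B i) - B i) <= (1 - delta) * frobB B.
Proof. by apply: frobB_le_blockwise => i; exact: HQ. Qed.

Lemma frobB_compress_residual B :
  frobB (fun i => B i - Q (B i)) <= (1 - delta) * frobB B.
Proof.
rewrite -frobBN (eq_frobB (fun i => opprB _ _)); exact: frobB_compress_err.
Qed.

Lemma frobB_IminusW_hatH_le E H Ht : 0 <= delta <= 1 ->
  frobB (IminusW_apply W (hatH Q E H Ht))
  <= 2 * ((1 - delta) * frobB (fun i => H i - Ht i) + 2 * frobB E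
          + frobB (fun i => H i - Winf_apply H i)).
Proof.
move=> /andP[delta_ge0 delta_le1].
set D := fun i => H i - Ht i; set A := fun i => E i + D i.
set V := fun i => H i - Winf_apply H i; set c := n%:R^-1 *: \sum_j H j.
rewrite -(eq_frobB (IminusW_apply_subr _ c)).
apply: le_trans (frobB_IminusW_le _) _; rewrite ler_pM2l //.
have split_hatH i : hatH Q E H Ht i - c = Q (A i) - A i + E i + V i.
  rewrite /A /D (addrA (E i)); apply/matrixP => a b.
  by rewrite /hatH /V /Winf_apply !mxE; ring.
rewrite (eq_frobB split_hatH).
apply: le_trans (frobBD _ _) _; have := frobBD (fun i => Q (A i) - A i) E.
have : (1 - delta) * frobB A <= (1 - delta) * (frobB E + frobB D).
  by apply: ler_wpM2l; [rewrite subr_ge0 | exact: frobBD].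
have := frobB_compress_err A; have := frobB_ge0 E.
nra.
Qed.

End CompressedGossip.

Theorem lemma7 (R : realType) (n d : nat)
  (adj : rel 'I_n) (W : 'M[R]_n)
  (f : 'I_n -> 'rV[R]_d -> R) (L1 L2 : R)
  (Q : 'M[R]_d -> 'M[R]_d) (delta gamma : R)
  (x : nat -> 'I_n -> 'rV[R]_d)
  (E Ht H : nat -> 'I_n -> 'M[R]_d)
  (* undirected connected graph *)
  (Hadj_sym : symmetric adj) (Hadj_irr : irreflexive adj)
  (Hconn : forall i j, connect adj i j)
  (* mixing matrix *)
  (HWnn : forall i j, 0 <= W i j)
  (HWsym : W^T = W)
  (HWstoch : forall i, \sum_(j < n) W i j = 1)
  (HWsupp : forall i j, W i j = 0 <-> (j != i /\ ~~ adj i j))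
  (* local functions *)
  (Hf_C2 : forall i, C2 (f i))
  (Hgrad : forall i y z, frob (gradient (f i) y - gradient (f i) z) <= L1 * frob (y - z))
  (Hhess : forall i y z, frob (hessian (f i) y - hessian (f i) z) <= L2 * frob (y - z))
  (* compressor *)
  (Hdelta : 0 < delta <= 1)
  (HQ : forall A, frob (Q A - A) <= (1 - delta) * frob A)
  (Hgamma : 0 < gamma)
  (* recursions *)
  (HH0 : forall i, H 0%N i = hessian (f i) (x 0%N i))
  (HE : forall k i, E k.+1 i = E k i + H k i - Ht k i - Q (E k i + H k i - Ht k i))
  (HHt : forall k i, Ht k.+1 i = Ht k i + Q (H k i - Ht k i))
  (HH : forall k i, H k.+1 i =
      H k i - gamma *: IminusW_apply W
                 (fun j => Ht k j + Q (E k j + H k j - Ht k j)) i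
      + hessian (f i) (x k.+1 i) - hessian (f i) (x k i)) :
  forall k : nat,
    frobB (fun i => H k.+1 i - Ht k.+1 i)
    <= (1 - delta + 2 * gamma * (1 - delta)) * frobB (fun i => H k i - Ht k i)
       + 4 * gamma * frobB (E k)
       + 2 * gamma * frobB (fun i => H k i - Winf_apply (H k) i)
       + L2 * frobB (fun i => x k.+1 i - x k i).
Proof.
move=> k.
have W_cols j : \sum_i W i j = 1.
  by rewrite -(HWstoch j); apply: eq_bigr => i _; rewrite -{1}HWsym mxE.
set D := fun i => H k i - Ht k i.
set hessD := fun i => hessian (f i) (x k.+1 i) - hessian (f i) (x k i).
have step i : H k.+1 i - Ht k.+1 i
    = D i - Q (D i) - gamma *: IminusW_apply W (hatH Q (E k) (H k) (Ht k)) i + hessD i.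
  by rewrite HH HHt; apply/matrixP => a b; rewrite /D /hessD !mxE; ring.
rewrite (eq_frobB step).
have bD := frobB_compress_residual HQ D.
have delta01 : 0 <= delta <= 1 by case/andP: Hdelta => /ltW -> ->.
have bI := frobB_IminusW_hatH_le HWnn HWstoch W_cols HQ (E k) (H k) (Ht k) delta01.
have bhess : frobB hessD <= L2 * frobB (fun i => x k.+1 i - x k i).
  by apply: frobB_le_blockwise => i; exact: Hhess.
apply: le_trans (frobBD _ _) _; have := frobBB (fun i => D i - Q (D i))
  (fun i => gamma *: IminusW_apply W (hatH Q (E k) (H k) (Ht k)) i).
rewrite frobBZ gtr0_norm //; have := ler_wpM2l (ltW Hgamma) bI.
lra.
Qed.
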